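(* Let $k\in\mathbb{Z}_{\geqslant 2}$. Then for all $n\in\mathbb{Z}_{\geqslant 1}$ and all $0<\varepsilon\leqslant\frac{k-1}{6}$, $$\tau_k(n)\leqslant \min\left(k^{\Omega(n)},\ \left(\tfrac{3(k-1)}{5\varepsilon}\right)^{k^{1/\varepsilon}(k-1)} n^{\varepsilon}\right).$$
   Context: $\tau_k(n)$ is the number of ordered $k$-tuples of positive integers with product $n$; $\Omega(n)$ is the number of prime factors of $n$ counted with multiplicity. *)

From Stdlib Require Import Reals.
From mathcomp Require Import all_boot.
Set Implicit Arguments. Unset Strict Implicit. Unset Printing Implicit Defensive.

(* tau_k(n): number of ordered k-tuples of positive integers with product n.
   For n >= 1 every entry of such a tuple divides n, hence lies in [1, n],
   so the tuples are enumerated inside k.-tuple 'I_n.+1. *)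
Definition tau (k n : nat) : nat :=
  #|[set t : k.-tuple 'I_n.+1 |
      all (fun i : 'I_n.+1 => 0 < val i) t && (\prod_(i <- t) val i == n)]|.

Definition Omega (n : nat) : nat := \sum_(p <- primes n) logn p n.

(* Counting tuples prime by prime: the p-parts of the entries of a factorization of n
   are factorizations of the p-part of n, so tau_k(n) <= prod_{p | n} tau_k(p^a_p).
   Dividing out one prime at a time gives tau_k(p^a) <= k^a, hence the first bound;
   a factorization of p^a is determined by the exponents of its last k - 1 entries,
   so also tau_k(p^a) <= (a+1)^(k-1).
   For the second bound put u = (k-1)/eps >= 6 and B = 3u/5.  If p >= K = k^(1/eps)
   then k^a <= p^(a eps).  Otherwise a + 1 <= B^w(p) p^(a/u), where w(2) = 2 and
   w(p) = 1 for odd p, so tau_k(p^a) <= B^((k-1) w(p)) p^(a eps).  The primes below K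
   are distinct integers in [2, K), so their total weight is less than K. *)

From Stdlib Require Import Reals Lra Psatz.
From mathcomp Require Import all_boot zify.

Set Implicit Arguments. Unset Strict Implicit. Unset Printing Implicit Defensive.

Definition tau_tuples k n := [set t : k.-tuple 'I_n.+1 |
  all (fun i : 'I_n.+1 => 0 < val i) t && (\prod_(i <- t) val i == n)].

Lemma tauE k n : tau k n = #|tau_tuples k n|.
Proof. by []. Qed.

Definition is_factorization k m (x : 'I_k -> nat) :=
  (forall i, 0 < x i) /\ \prod_(i < k) x i = m.

Lemma mem_tau_tuples k n (t : k.-tuple 'I_n.+1) :
  reflect (is_factorization n (fun i => val (tnth t i))) (t \in tau_tuples k n).
Proof.
rewrite inE big_tuple; apply: (iffP andP) => [[/all_tnthP pos /eqP prod] | [pos prod]].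
  by split.
by split; [apply/all_tnthP | apply/eqP].
Qed.

Lemma dvdn_prod_ord k (x : 'I_k -> nat) i : x i %| \prod_(j < k) x j.
Proof. by rewrite (bigD1 i) //= dvdn_mulr. Qed.

Lemma factor_leq k m (x : 'I_k -> nat) i : is_factorization m x -> x i <= m.
Proof.
by case=> pos <-; apply: dvdn_leq (dvdn_prod_ord x i); rewrite prodn_gt0.
Qed.

Definition inord_tuple k m (x : 'I_k -> nat) : k.-tuple 'I_m.+1 :=
  [tuple inord (x i) | i < k].

Lemma tnth_inord_tuple k m (x : 'I_k -> nat) i :
  is_factorization m x -> val (tnth (inord_tuple m x) i) = x i.
Proof. by move=> fx; rewrite tnth_mktuple /= inordK // ltnS (factor_leq i fx). Qed.

Lemma inord_tuple_in k m (x : 'I_k -> nat) :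
  is_factorization m x -> inord_tuple m x \in tau_tuples k m.
Proof.
move=> fx; apply/mem_tau_tuples; have [pos prod] := fx.
by split=> [i|]; rewrite -?prod; [|apply: eq_bigr => i _]; rewrite tnth_inord_tuple.
Qed.

Lemma inord_tuple_inj k m (x y : 'I_k -> nat) :
  is_factorization m x -> is_factorization m y ->
  inord_tuple m x = inord_tuple m y -> x =1 y.
Proof.
by move=> fx fy exy i; rewrite -(tnth_inord_tuple i fx) -(tnth_inord_tuple i fy) exy.
Qed.

Lemma tau1_le k : tau k 1 <= 1.
Proof.
rewrite tauE; apply/card_le1_eqP => t1 t2 /mem_tau_tuples[_ prod1] /mem_tau_tuples[_ prod2].
have unit_factor (t : k.-tuple 'I_2) i : \prod_(j < k) val (tnth t j) = 1 -> val (tnth t i) = 1.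
  move=> prod; apply/eqP; rewrite -dvdn1.
  by have := dvdn_prod_ord (fun j => val (tnth t j)) i; rewrite prod.
by apply: eq_from_tnth => i; apply: val_inj; rewrite !unit_factor.
Qed.

Lemma partn_prod I r (P : pred I) (F : I -> nat) (pi : nat_pred) :
  (forall i, P i -> 0 < F i) ->
  (\prod_(i <- r | P i) F i)`_pi = \prod_(i <- r | P i) (F i)`_pi.
Proof.
move=> F_gt0; suff [] : 0 < \prod_(i <- r | P i) F i /\
    (\prod_(i <- r | P i) F i)`_pi = \prod_(i <- r | P i) (F i)`_pi by [].
apply: (big_ind2 (fun a b => 0 < a /\ a`_pi = b)); first by rewrite partn1.
  by move=> a b c d [a_gt0 <-] [c_gt0 <-]; rewrite muln_gt0 a_gt0 partnM.
by move=> i /F_gt0 ->.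
Qed.

Lemma tau_le_mul_part k pi n : 0 < n -> tau k n <= tau k n`_pi * tau k n`_pi^'.
Proof.
move=> n_gt0; rewrite !tauE -cardsX.
pose part rho (t : k.-tuple 'I_n.+1) i := (val (tnth t i))`_rho.
have part_fact rho t : t \in tau_tuples k n -> is_factorization n`_rho (part rho t).
  case/mem_tau_tuples=> pos prod; split=> [i|]; first exact: part_gt0.
  by rewrite -prod partn_prod.
pose f t := (inord_tuple n`_pi (part pi t), inord_tuple n`_pi^' (part pi^' t)).
have f_inj : {in tau_tuples k n &, injective f}.
  move=> t1 t2 t1_in t2_in /pair_equal_spec[e_pi e_pi'].
  have /mem_tau_tuples[pos1 _] := t1_in; have /mem_tau_tuples[pos2 _] := t2_in.
  apply: eq_from_tnth => i; apply: val_inj.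
  rewrite -(partnC pi (pos1 i)) -(partnC pi (pos2 i)).
  have := inord_tuple_inj (part_fact _ _ t1_in) (part_fact _ _ t2_in) e_pi i.
  have := inord_tuple_inj (part_fact _ _ t1_in) (part_fact _ _ t2_in) e_pi' i.
  by rewrite /part => -> ->.
rewrite -(card_in_imset f_inj); apply/subset_leq_card/subsetP => _ /imsetP[t t_in ->].
by apply/setXP; split; apply: inord_tuple_in; apply: part_fact.
Qed.

Lemma divn_factorization k p m (x : 'I_k -> nat) i :
  0 < p -> p %| x i -> is_factorization (p * m) x ->
  is_factorization m (fun j => if j == i then x j %/ p else x j).
Proof.
move=> p_gt0 /dvdnP[q xiE] [pos prod]; split=> [j|].
  case: eqP => [->|_]; last exact: pos.
  by have := pos i; rewrite xiE mulnK // muln_gt0 => /andP[].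
apply/eqP; rewrite -(eqn_pmul2l p_gt0) -prod (bigD1 i) //= [X in _ == X](bigD1 i) //=.
rewrite eqxx xiE mulnK // mulnA [p * q]mulnC; apply/eqP; congr (_ * _).
by apply: eq_bigr => j /negbTE ->.
Qed.

Lemma tau_pmul_le k p m : prime p -> 0 < m -> tau k (p * m) <= k * tau k m.
Proof.
move=> p_pr m_gt0; rewrite !tauE.
pose x (t : k.-tuple 'I_(p * m).+1) j := val (tnth t j).
pose pos t := [pick i | p %| x t i].
pose reduce t j := if Some j == pos t then x t j %/ p else x t j.
have pos_dvd t : t \in tau_tuples k (p * m) -> exists2 i, pos t = Some i & p %| x t i.
  case/mem_tau_tuples=> _ prod; rewrite /pos; case: pickP => [i|none]; first by exists i.
  have := dvdn_mulr m (dvdnn p); rewrite -prod Euclid_dvd_prod // big_orE.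
  by case/existsP => i; rewrite none.
have reduce_fact t : t \in tau_tuples k (p * m) -> is_factorization m (reduce t).
  move=> t_in; have [i pos_i dvd_i] := pos_dvd t t_in; have /mem_tau_tuples fact := t_in.
  by rewrite /reduce pos_i; exact: (divn_factorization (prime_gt0 p_pr) dvd_i fact).
pose f t := (pos t, inord_tuple m (reduce t)).
have f_inj : {in tau_tuples k (p * m) &, injective f}.
  move=> t1 t2 t1_in t2_in /pair_equal_spec[e_pos e_red].
  have [i pos1 dvd1] := pos_dvd t1 t1_in; have [i' pos2 dvd2] := pos_dvd t2 t2_in.
  move: pos2 dvd2; rewrite -e_pos pos1 => -[<-] dvd2.
  have e := inord_tuple_inj (reduce_fact t1 t1_in) (reduce_fact t2 t2_in) e_red.
  apply: eq_from_tnth => j; apply: val_inj; have := e j.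
  rewrite /reduce -e_pos pos1; case: eqP => [[->] e_i|_ //].
  by move: dvd1 dvd2; rewrite /x => /divnK <- /divnK <-; rewrite e_i.
rewrite -(card_in_imset f_inj).
apply: (@leq_trans #|setX [set Some i | i : 'I_k] (tau_tuples k m)|).
  apply/subset_leq_card/subsetP => _ /imsetP[t t_in ->]; apply/setXP; split.
    by have [i -> _] := pos_dvd t t_in; rewrite imset_f.
  exact/inord_tuple_in/reduce_fact.
by rewrite cardsX card_imset ?card_ord // => i j [].
Qed.

Lemma tau_pexp_le_expn k p a : prime p -> tau k (p ^ a) <= k ^ a.
Proof.
move=> p_pr; elim: a => [|a IHa]; first exact: tau1_le.
have pa_gt0 : 0 < p ^ a by rewrite expn_gt0 prime_gt0.
rewrite !expnS; apply: leq_trans (tau_pmul_le k p_pr pa_gt0) _.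
by rewrite leq_mul2l IHa orbT.
Qed.

Lemma factorization_eq_tail k m (x y : 'I_k.+1 -> nat) :
  is_factorization m x -> is_factorization m y ->
  (forall i, x (lift ord0 i) = y (lift ord0 i)) -> x =1 y.
Proof.
move=> [_ x_prod] [y_pos y_prod] e_tail j.
case: (unliftP ord0 j) => [i ->|->]; first exact: e_tail.
move: x_prod y_prod; rewrite !big_ord_recl (eq_bigr _ (fun i _ => e_tail i)) => <- /eqP.
by rewrite eqn_pmul2r ?prodn_gt0 // => /eqP.
Qed.

Lemma tau_pexp_le_succ_expn k p a : prime p -> tau k.+1 (p ^ a) <= a.+1 ^ k.
Proof.
move=> p_pr; rewrite tauE.
have pfactor_entry t j : t \in tau_tuples k.+1 (p ^ a) ->
    logn p (val (tnth t j)) <= a /\ val (tnth t j) = p ^ logn p (val (tnth t j)).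
  case/mem_tau_tuples=> _ prod.
  have := dvdn_prod_ord (fun j => val (tnth t j)) j; rewrite prod.
  by case/(dvdn_pfactor _ _ p_pr) => e e_le ->; rewrite pfactorK.
pose f (t : k.+1.-tuple 'I_(p ^ a).+1) : k.-tuple 'I_a.+1 :=
  [tuple inord (logn p (val (tnth t (lift ord0 i)))) | i < k].
have f_inj : {in tau_tuples k.+1 (p ^ a) &, injective f}.
  move=> t1 t2 t1_in t2_in e.
  have /mem_tau_tuples fact1 := t1_in; have /mem_tau_tuples fact2 := t2_in.
  apply: eq_from_tnth => j; apply: val_inj; apply: (factorization_eq_tail fact1 fact2) => i.
  have [le1 ->] := pfactor_entry t1 (lift ord0 i) t1_in.
  have [le2 ->] := pfactor_entry t2 (lift ord0 i) t2_in.
  by have := congr1 (fun t => val (tnth t i)) e; rewrite !tnth_mktuple /= !inordK // => ->.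
by have := leq_card_in _ _ f_inj; rewrite card_tuple card_ord.
Qed.

Lemma tau_le_prod_parts k n (s : seq nat) :
  0 < n -> uniq s -> {subset primes n <= s} -> tau k n <= \prod_(p <- s) tau k n`_p.
Proof.
elim: s n => [|p s IHs] n n_gt0 /=.
  move=> _ sub; rewrite big_nil.
  case E : (primes n) sub => [|q l] sub; last by have := sub q (mem_head q l).
  have -> : n = 1 by move/eqP: E; rewrite primes_eq0; lia.
  exact: tau1_le.
case/andP=> p_notin s_uniq sub; rewrite big_cons.
apply: leq_trans (tau_le_mul_part k p n_gt0) _; rewrite leq_mul2l; apply/orP; right.
have -> : \prod_(q <- s) tau k n`_q = \prod_(q <- s) tau k n`_p^'`_q.
  rewrite big_seq [RHS]big_seq; apply: eq_bigr => q q_in; rewrite partn_part // => r.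
  by rewrite !inE => /eqP ->; apply: contraNneq p_notin => <-.
apply: IHs => // q; rewrite primes_part mem_filter => /andP[q_p' /sub].
by rewrite inE => /orP[/eqP q_p|//]; move: q_p'; rewrite q_p !inE eqxx.
Qed.

Lemma tau_le_expn_Omega k n : 0 < n -> tau k n <= k ^ Omega n.
Proof.
move=> n_gt0; rewrite /Omega expn_sum.
apply: leq_trans (tau_le_prod_parts k n_gt0 (primes_uniq n) (fun _ => id)) _.
rewrite big_seq [X in _ <= X]big_seq; apply: leq_prod => p.
by rewrite mem_primes p_part => /andP[p_pr _]; exact: tau_pexp_le_expn.
Qed.

Lemma prod_p_parts n : 0 < n -> \prod_(p <- primes n) n`_p = n.
Proof.
move=> n_gt0; rewrite [RHS](prod_prime_decomp n_gt0) prime_decompE big_map.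
by apply: eq_bigr => p _; rewrite p_part.
Qed.

Lemma sum_weight_le_max (s : seq nat) :
  uniq s -> {in s, forall p, 1 < p} -> \sum_(p <- s) (p == 2).+1 <= \max_(p <- s) p.
Proof.
move=> s_uniq s_gt1; set M := \max_(p <- s) p.
have le_M p : p \in s -> p <= M by move=> p_in; apply: leq_bigmax_seq.
have size_s : size s <= M.-1.
  rewrite -(size_iota 2 M.-1); apply: uniq_leq_size s_uniq _ => p p_in.
  by rewrite mem_iota; have := s_gt1 p p_in; have := le_M p p_in; lia.
have -> : \sum_(p <- s) (p == 2).+1 = size s + (2 \in s).
  rewrite -sum1_size -(count_uniq_mem 2 s_uniq) -sum1_count [X in _ + X]big_mkcond -big_split.
  by apply: eq_bigr => p _; rewrite /= add1n; case: eqP.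
by case: (boolP (2 \in s)) => [/le_M|_]; lia.
Qed.

Local Open Scope R_scope.

Definition small_weight (K : R) (p : nat) : nat :=
  if Rlt_dec (INR p) K then (p == 2)%N.+1 else 0%N.

Lemma INR_leq m n : (m <= n)%N -> INR m <= INR n.
Proof. by move/leP; apply: le_INR. Qed.

Lemma sum_small_weight_le K n : 0 < K -> INR (\sum_(p <- primes n) small_weight K p) <= K.
Proof.
move=> K_gt0; set s := [seq p <- primes n | Rlt_dec (INR p) K].
have -> : (\sum_(p <- primes n) small_weight K p = \sum_(p <- s) (p == 2).+1)%N.
  rewrite big_filter [RHS]big_mkcond; apply: eq_bigr => p _.
  by rewrite /small_weight; case: Rlt_dec.
apply: Rle_trans (INR_leq (sum_weight_le_max _ _)) _.
- by rewrite filter_uniq ?primes_uniq.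
- by move=> p; rewrite mem_filter mem_primes => /and3P[_ /prime_gt1].
apply: Rlt_le; rewrite big_seq; apply: (big_ind (fun m => INR m < K)) => //.
  by move=> x y x_lt y_lt; rewrite /maxn; case: ltnP.
by move=> p; rewrite mem_filter; case: Rlt_dec.
Qed.

Lemma INR_gt0 m : (0 < m)%N -> 0 < INR m.
Proof. by move/ltP/lt_0_INR. Qed.

Lemma INR_predn n : (0 < n)%N -> INR n.-1 = INR n - 1.
Proof. by move=> n_gt0; rewrite -[in RHS](prednK n_gt0) S_INR; ring. Qed.

Lemma INR_expn m n : INR (m ^ n) = INR m ^ n.
Proof. by elim: n => [|n IHn] //=; rewrite expnS mult_INR IHn. Qed.

Lemma Rpower_1_l x : Rpower 1 x = 1.
Proof. by rewrite /Rpower ln_1 Rmult_0_r exp_0. Qed.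

Lemma INR_prod_le_pow_Rpower (s : seq nat) (f g c : nat -> nat) (B eps : R) :
  0 <= B -> (forall p, (0 < g p)%N) ->
  (forall p, p \in s -> INR (f p) <= B ^ c p * Rpower (INR (g p)) eps) ->
  INR (\prod_(p <- s) f p) <=
    B ^ (\sum_(p <- s) c p) * Rpower (INR (\prod_(p <- s) g p)) eps.
Proof.
move=> B_ge0 g_gt0; elim: s => [|p s IHs] bound.
  by rewrite !big_nil /= Rpower_1_l; lra.
rewrite !big_cons !mult_INR pow_add -Rpower_mult_distr;
  [| exact: INR_gt0 | exact/INR_gt0/prodn_gt0].
have Rpower_ge0 x : 0 <= Rpower x eps by apply/Rlt_le/exp_pos.
have IH := IHs (fun q q_in => bound q (mem_behead (s := p :: s) q_in)).
apply: Rle_trans (Rmult_le_compat _ _ _ _ (pos_INR _) (pos_INR _) (bound p (mem_head p s)) IH) _.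
right; ring.
Qed.

Lemma one_add_half_le_Rpower2 y : 0 <= y -> 1 + y / 2 <= Rpower 2 y.
Proof. by move=> y_ge0; have := ln_lt_2; have := exp_ineq1_le (y * ln 2); rewrite /Rpower; nra. Qed.

Lemma sqr_one_add_half_le_Rpower x y : 3 <= x -> 0 <= y -> (1 + y / 2) ^ 2 <= Rpower x y.
Proof.
move=> x_ge3 y_ge0; have half_le := exp_ineq1_le (y / 2).
apply: Rle_trans (_ : exp (y / 2) * exp (y / 2) <= _).
  by rewrite /= Rmult_1_r; apply: Rmult_le_compat; lra.
have -> : exp (y / 2) * exp (y / 2) = Rpower (exp 1) y.
  by rewrite -exp_plus /Rpower ln_exp; congr exp; field.
by apply: Rle_Rpower_l => //; split; [exact: exp_pos | have := exp_le_3; lra].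
Qed.

Lemma one_add_mul_le_sqr_mul u y : 6 <= u -> 0 <= y ->
  1 + y * u <= (3 * u / 5) ^ 2 * (1 + y / 2).
Proof.
move=> u_ge6 y_ge0.
have : 0 <= y * u * (9 * u / 50 - 1) by apply: Rmult_le_pos; nra.
have : 1 <= 3 * u / 5 * (3 * u / 5) by nra.
rewrite /=; nra.
Qed.

Lemma one_add_mul_le_mul_sqr u y : 6 <= u -> 0 <= y ->
  1 + y * u <= 3 * u / 5 * (1 + y / 2) ^ 2.
Proof.
move=> u_ge6 y_ge0.
have : 0 <= u * (3 / 20 * (y - 4 / 3) ^ 2) by apply/Rmult_le_pos/Rmult_le_pos/pow2_ge_0; lra.
have -> : 3 * u / 5 * (1 + y / 2) ^ 2 = 1 + y * u + u * (3 / 20 * (y - 4 / 3) ^ 2) + (u / 3 - 1).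
  by rewrite /=; field.
lra.
Qed.

Lemma succ_le_weight_Rpower u p a : 6 <= u -> prime p ->
  INR a + 1 <= (3 * u / 5) ^ (p == 2)%N.+1 * Rpower (INR p) (INR a / u).
Proof.
move=> u_ge6 p_pr; set y := INR a / u.
have y_ge0 : 0 <= y by apply/Rmult_le_pos/Rlt_le/Rinv_0_lt_compat; [exact: pos_INR | lra].
have -> : INR a + 1 = 1 + y * u by rewrite /y; field; lra.
case: eqP => [->|p_neq2].
  apply: Rle_trans (one_add_mul_le_sqr_mul u_ge6 y_ge0) _.
  apply: Rmult_le_compat_l; first by apply: pow_le; lra.
  have -> : INR 2 = 2 by rewrite /=; lra.
  exact: one_add_half_le_Rpower2.
have p_ge3 : 3 <= INR p.
  have : (3 <= p)%N by have := prime_gt1 p_pr; lia.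
  by move/INR_leq; rewrite /=; lra.
apply: Rle_trans (one_add_mul_le_mul_sqr u_ge6 y_ge0) _; rewrite pow_1.
by apply: Rmult_le_compat_l; [lra | exact: sqr_one_add_half_le_Rpower].
Qed.

Section PrimePowerBounds.

Variables (k : nat) (eps : R).
Hypotheses (k_ge2 : (2 <= k)%N) (eps_gt0 : 0 < eps) (eps_le : eps <= (INR k - 1) / 6).

Local Notation B := (3 * (INR k - 1) / (5 * eps)).
Local Notation K := (Rpower (INR k) (1 / eps)).

Lemma six_le_ratio : 6 <= (INR k - 1) / eps.
Proof. by apply: (Rmult_le_reg_r eps) => //; rewrite /Rdiv Rmult_assoc Rinv_l; lra. Qed.

Lemma one_le_base : 1 <= B.
Proof.
have -> : B = 3 / 5 * ((INR k - 1) / eps) by field; lra.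
by have := six_le_ratio; lra.
Qed.

Lemma tau_pexp_le_Rpower p a : prime p -> K <= INR p ->
  INR (tau k (p ^ a)) <= Rpower (INR (p ^ a)) eps.
Proof.
move=> p_pr K_le_p; have p_gt0 := INR_gt0 (prime_gt0 p_pr).
have k_le : INR k <= Rpower (INR p) eps.
  have k_gt0 : 0 < INR k by apply/INR_gt0/ltnW.
  have -> : INR k = Rpower K eps.
    by rewrite Rpower_mult /Rdiv Rmult_1_l Rinv_l ?Rpower_1 //; lra.
  by apply: Rle_Rpower_l; [lra | split => //; exact: exp_pos].
apply: Rle_trans (INR_leq (tau_pexp_le_expn k a p_pr)) _.
rewrite !INR_expn -[INR p ^ a]Rpower_pow // Rpower_mult Rmult_comm -Rpower_mult.
rewrite Rpower_pow; last exact: exp_pos.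
by apply: pow_incr; split => //; exact: pos_INR.
Qed.

Lemma tau_pexp_le_weight_Rpower p a : prime p ->
  INR (tau k (p ^ a)) <= B ^ ((p == 2)%N.+1 * k.-1) * Rpower (INR (p ^ a)) eps.
Proof.
move=> p_pr; have p_gt0 := INR_gt0 (prime_gt0 p_pr).
have B_eq : B = 3 * ((INR k - 1) / eps) / 5 by field; lra.
have := tau_pexp_le_succ_expn k.-1 a p_pr; rewrite prednK ?(ltnW k_ge2) // => /INR_leq tau_le.
apply: Rle_trans tau_le _; rewrite INR_expn S_INR.
have succ_le := succ_le_weight_Rpower a six_le_ratio p_pr.
apply: Rle_trans (pow_incr _ _ k.-1 (conj _ succ_le)) _; first by have := pos_INR a; lra.
rewrite Rpow_mult_distr pow_mult -B_eq; apply: Rmult_le_compat_l.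
  by apply/pow_le/pow_le; have := one_le_base; lra.
rewrite -Rpower_pow; last exact: exp_pos.
rewrite INR_expn -Rpower_pow // !Rpower_mult (INR_predn (ltnW k_ge2)); right; congr Rpower.
by field; split; lra.
Qed.

Lemma tau_pexp_le_small_weight p a : prime p ->
  INR (tau k (p ^ a)) <= B ^ (small_weight K p * k.-1) * Rpower (INR (p ^ a)) eps.
Proof.
move=> p_pr; rewrite /small_weight; case: Rlt_dec => /= [_|/Rnot_lt_le K_le_p].
  exact: tau_pexp_le_weight_Rpower.
by rewrite Rmult_1_l; exact: tau_pexp_le_Rpower.
Qed.

Lemma tau_le_small_weight_Rpower n : (0 < n)%N ->
  INR (tau k n) <= B ^ (\sum_(p <- primes n) small_weight K p * k.-1) * Rpower (INR n) eps.
Proof.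
move=> n_gt0.
apply: Rle_trans (INR_leq (tau_le_prod_parts k n_gt0 (primes_uniq n) (fun _ => id))) _.
rewrite -[X in Rpower (INR X) eps](prod_p_parts n_gt0).
apply: INR_prod_le_pow_Rpower => [|q|p]; first by have := one_le_base; lra.
  exact: part_gt0.
by rewrite mem_primes p_part => /andP[p_pr _]; exact: tau_pexp_le_small_weight.
Qed.

End PrimePowerBounds.

Theorem lemma3 (k : nat) (hk : (2 <= k)%N) (n : nat) (hn : (1 <= n)%N)
  (eps : R) (heps0 : 0 < eps) (heps1 : eps <= (INR k - 1) / 6) :
  INR (tau k n) <=
    Rmin (INR k ^ Omega n)
         (Rpower (3 * (INR k - 1) / (5 * eps))
                 (Rpower (INR k) (1 / eps) * (INR k - 1))
          * Rpower (INR n) eps).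
Proof.
apply: Rmin_glb; first by rewrite -INR_expn; apply/INR_leq/tau_le_expn_Omega.
apply: Rle_trans (tau_le_small_weight_Rpower hk heps0 heps1 hn) _.
apply: Rmult_le_compat_r; first exact/Rlt_le/exp_pos.
have B_ge1 := one_le_base heps0 heps1.
rewrite -big_distrl /= -Rpower_pow; last lra.
apply: Rle_Rpower => //; rewrite mult_INR.
rewrite (INR_predn (ltnW hk)); apply: Rmult_le_compat_r.
  by have := INR_leq hk; rewrite /=; lra.
exact/sum_small_weight_le/exp_pos.
Qed.
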